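(* Let $h$ and $a$ be positive integers and let $k = a^2$. Then $\left((a-1)h+1\right)^2 \in \mathcal{R}_{\mathbf{Z}}(h,k)$.
   Context: For a positive integer $h$ and a finite set $A$ of integers, $hA$ denotes the set of all sums $a_1+\cdots+a_h$ with $a_1,\ldots,a_h \in A$ (not necessarily distinct). The sumset size set is $\mathcal{R}_{\mathbf{Z}}(h,k) = \{ |hA| : A \subseteq \mathbf{Z},\ |A| = k\}$. *)

From HB Require Import structures.
From mathcomp Require Import all_boot all_order all_algebra.
From mathcomp Require Import finmap.
Set Implicit Arguments. Unset Strict Implicit. Unset Printing Implicit Defensive.
Import Order.TTheory GRing.Theory Num.Theory.
Local Open Scope fset_scope.
Local Open Scope ring_scope.

Definition sumset (A B : {fset int}) : {fset int} :=
  [fset (a + b)%R | a in A, b in B].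

(* h-fold sumset hA = {a_1 + ... + a_h : a_i in A}, for h >= 1:
   1A = A and (h+1)A = A + hA.  (h = 0 is not used; it gives A.) *)
Fixpoint hfold (h : nat) (A : {fset int}) : {fset int} :=
  match h with
  | 0%N | 1%N => A
  | h'.+1 => sumset A (hfold h' A)
  end.

Definition in_RZ (h k n : nat) : Prop :=
  exists A : {fset int}, #|` A| = k /\ #|` hfold h A| = n.

(* A square of side a in base N, i.e. the integers x + N y with digits
   0 <= x, y < a, has a^2 elements as long as a <= N.  Adding such digit
   squares adds their sides (minus one) coordinatewise, so the h-fold sumset
   of the square of side a is the square of side (a - 1) h + 1.  Choosing
   N = (a - 1) h + 1 makes that square the full interval [0, N^2). *)
From mathcomp Require Import all_boot all_order all_algebra.
From mathcomp Require Import finmap zify.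
Local Open Scope ring_scope.
Local Open Scope nat_scope.

Lemma size_enum_finmem_uniq (T : eqType) (s : seq T) :
  uniq s -> size (enum_finmem (mem s)) = size s.
Proof.
move=> s_uniq; apply/perm_size/uniq_perm => //; first exact: enum_finmem_uniq.
by move=> x; rewrite enum_finmemE.
Qed.

Lemma base_digits_inj [N x1 y1 x2 y2 : nat] :
  x1 < N -> x2 < N -> x1 + N * y1 = x2 + N * y2 -> x1 = x2 /\ y1 = y2.
Proof.
move=> x1N x2N e; have N_gt0 : 0 < N by lia.
have digitsE x y : x < N -> (x + N * y) %% N = x /\ (x + N * y) %/ N = y.
  by move=> xN; rewrite addnC mulnC modnMDl divnMDl // modn_small // divn_small // addn0.
have [mod1 div1] := digitsE x1 y1 x1N; have [mod2 div2] := digitsE x2 y2 x2N.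
by split; [rewrite -mod1 -mod2 | rewrite -div1 -div2]; rewrite e.
Qed.

Lemma hfoldS (h : nat) (A : {fset int}) :
  0 < h -> hfold h.+1 A = sumset A (hfold h A).
Proof. by case: h. Qed.

Section DigitSquare.

Variable N : nat.

Definition digit_square (m : nat) : {fset int} :=
  [fset (x + N * y)%:Z | x in iota 0 m, y in iota 0 m]%fset.

Lemma digit_squareP (m : nat) (z : int) :
  reflect (exists x y, [/\ x < m, y < m & z = (x + N * y)%:Z])
          (z \in digit_square m).
Proof.
apply: (iffP (imfset2P _ _ _ _ _)).
  by move=> [x]; rewrite mem_iota => xm [y]; rewrite mem_iota => ym ->; exists x, y.
by move=> [x [y [xm ym ->]]]; exists x; rewrite ?mem_iota //; exists y; rewrite ?mem_iota.
Qed.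

Lemma card_digit_square (m : nat) : m <= N -> #|` digit_square m|%fset = m ^ 2.
Proof.
move=> mN; rewrite (perm_size (enum_imfset2 _ _)).
  by rewrite size_allpairs size_enum_finmem_uniq ?iota_uniq // size_iota mulnn.
move=> [x1 y1] [x2 y2]; rewrite !inE /= !mem_iota !add0n => /andP[x1m _] /andP[x2m _].
by case=> /(base_digits_inj (leq_trans x1m mN) (leq_trans x2m mN)) [-> ->].
Qed.

Lemma sumset_digit_square (m n : nat) : 0 < m -> 0 < n ->
  sumset (digit_square m) (digit_square n) = digit_square (m + n).-1.
Proof.
move=> m_gt0 n_gt0; apply/fsetP => z; apply/imfset2P/digit_squareP.
  move=> [_ /digit_squareP[x1 [y1 [x1m y1m ->]]] [_ /digit_squareP[x2 [y2 [x2n y2n ->]]] ->]].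
  exists (x1 + x2), (y1 + y2); split; [lia | lia |].
  by rewrite -PoszD; congr Posz; lia.
move=> [x [y [xmn ymn ->]]].
exists (minn x m.-1 + N * minn y m.-1)%:Z.
  by apply/digit_squareP; exists (minn x m.-1), (minn y m.-1); split; lia.
exists ((x - minn x m.-1) + N * (y - minn y m.-1))%:Z.
  by apply/digit_squareP; exists (x - minn x m.-1), (y - minn y m.-1); split; lia.
by rewrite -PoszD; congr Posz; nia.
Qed.

Lemma hfold_digit_square (h m : nat) : 0 < h -> 0 < m ->
  hfold h (digit_square m) = digit_square ((m - 1) * h + 1).
Proof.
move=> + m_gt0; elim: h => // -[_ _ | h IH _]; first by rewrite muln1 subnK.
rewrite hfoldS // IH // sumset_digit_square ?addn1 //.
by congr digit_square; nia.
Qed.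

End DigitSquare.

Theorem mainTheorem5 (h a : nat) :
  (0 < h)%N -> (0 < a)%N ->
  in_RZ h (a ^ 2) (((a - 1) * h + 1) ^ 2).
Proof.
move=> h_gt0 a_gt0; set N := (a - 1) * h + 1.
exists (digit_square N a); split.
  by apply: card_digit_square; rewrite /N; nia.
by rewrite hfold_digit_square // card_digit_square.
Qed.
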